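(* Assume $\int_{(0,1)}\upsilon^p\lambda(d\upsilon)<\infty$ for some $p\in(1,2)$. Then for every $q\ge1$ there is a constant $\mathbf C_q$ such that for every $m\ge1$ and every $h\in(0,1)$, $$\int_{(0,q)^m}\mathbf 1_{\{\prod_{j=1}^m u_j\le h\,q^m\}}\prod_{i=1}^m u_i^2\,\lambda(du_i)\le h^{2-p}(\mathbf C_q)^m\sum_{\ell=1}^m\frac{(2-p)^{-\ell}}{(m-\ell)!}\big[\log(1/h)\big]^{m-\ell}.$$ In particular, for every $\varepsilon\in(0,2-p)$, $$\int_{(0,q)^m}\mathbf 1_{\{\prod_{j=1}^m u_j\le h\,q^m\}}\prod_{i=1}^m u_i^2\,\lambda(du_i)\le\frac{(\mathbf C_q/\varepsilon)^m}{2-p-\varepsilon}\,h^{2-p-\varepsilon}.$$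
   Context: $\lambda$ is a positive measure on $(0,\infty)$ with $\lambda([a,\infty))<\infty$ for every $a>0$. *)

From HB Require Import structures.
From mathcomp Require Import all_boot all_order all_algebra.
From mathcomp Require Import all_classical all_reals all_analysis.
Set Implicit Arguments. Unset Strict Implicit. Unset Printing Implicit Defensive.
Import Order.TTheory GRing.Theory Num.Theory.
Local Open Scope classical_set_scope.
Local Open Scope ring_scope.

(* m-fold integral over D^m with respect to the m-fold product of mu,
   written as an iterated integral (for nonnegative integrands and a
   sigma-finite mu this coincides with the integral against the product
   measure mu^{(x) m}, by Tonelli). *)
Fixpoint iter_integral (R : realType)
    (mu : {measure set R -> \bar R}) (D : set R) (m : nat)
    (g : seq R -> \bar R) : \bar R :=
  match m with
  | 0 => g [::]
  | m'.+1 => (\int[mu]_(u in D) iter_integral mu D m' (fun s => g (u :: s)))%E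
  end.

From HB Require Import structures.
From mathcomp Require Import all_boot all_order all_algebra.
From mathcomp Require Import all_classical all_reals all_analysis.
From mathcomp Require Import measurable_realfun lra.
Import Order.TTheory GRing.Theory Num.Theory.
Local Open Scope classical_set_scope.
Local Open Scope ring_scope.

(* On the event {u_1 ... u_m <= h q^m} write
     u_i^2 = u_i^p * u_i^(2-p)   and   prod_i u_i^(2-p) <= (h q^m)^(2-p),
   so the truncated integrand is dominated, on all of (0,q)^m, by
   h^(2-p) (q^(2-p))^m prod_i u_i^p.  The m-fold integral of the last product
   factorises as A^m with A = int_(0,q) v^p lam(dv), which is finite because
   the p-moment near 0 is finite and lam has finite tails.  This yields the
   sharper estimate  I <= h^(2-p) B^m  with  B = q^(2-p) A, and both claimed
   bounds follow with C_q = B + 1: the logarithmic sum is at least 1 (its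
   term l = m equals (2-p)^(-m) >= 1), and for 0 < eps < 2-p < 1 we have
   B <= C_q / eps, 1 <= 1/(2-p-eps) and h^(2-p) <= h^(2-p-eps). *)

Section IteratedIntegral.
Context (R : realType) (mu : {measure set R -> \bar R}) (D : set R).

(* Monotonicity of the integral of nonnegative functions, with no
   measurability assumption: it holds at the level of the supremum over
   dominated simple functions.  The inner functions of an iterated integral
   are not known to be measurable, hence this form. *)
Lemma ge0_le_integral_nomeas (f g : R -> \bar R) :
  (forall x, D x -> (0 <= f x)%E) -> (forall x, D x -> (f x <= g x)%E) ->
  (\int[mu]_(x in D) f x <= \int[mu]_(x in D) g x)%E.
Proof.
move=> f0 fg.
have g0 x : D x -> (0 <= g x)%E by move=> Dx; exact: le_trans (f0 x Dx) (fg x Dx).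
rewrite (ge0_integralE mu f0) (ge0_integralE mu g0).
apply: ereal_sup_le => _ [k /= kf <-]; exists k => //= x.
apply: le_trans (kf x) _; rewrite /patch; case: ifP => // /set_mem Dx; exact: fg.
Qed.

Definition in_cube (s : seq R) : bool := all (fun x => x \in D) s.

Lemma in_cube_cons (x : R) (s : seq R) : D x -> in_cube s -> in_cube (x :: s).
Proof. by move=> Dx hs; apply/andP; split => //; exact/mem_set. Qed.

Lemma iter_integral_ge0 (m : nat) (f : seq R -> \bar R) :
  (forall s, in_cube s -> (0 <= f s)%E) -> (0 <= iter_integral mu D m f)%E.
Proof.
elim: m f => [|m IH] f f0 /=; first exact: f0.
apply: integral_ge0 => x Dx; apply: IH => s hs; exact/f0/in_cube_cons.
Qed.

Lemma le_iter_integral (m : nat) (f g : seq R -> \bar R) :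
  (forall s, in_cube s -> (0 <= f s)%E) ->
  (forall s, in_cube s -> (f s <= g s)%E) ->
  (iter_integral mu D m f <= iter_integral mu D m g)%E.
Proof.
elim: m f g => [|m IH] f g f0 fg /=; first exact: fg.
apply: ge0_le_integral_nomeas => x Dx.
  by apply: iter_integral_ge0 => s hs; exact/f0/in_cube_cons.
by apply: IH => s hs; [apply: f0 | apply: fg]; exact: in_cube_cons.
Qed.

Lemma iter_integral_prod (phi : R -> R) (A : R) (m : nat) (c : R) :
  measurable D -> measurable_fun D phi -> (forall x, 0 <= phi x) ->
  (\int[mu]_(x in D) (phi x)%:E = A%:E)%E -> 0 <= c ->
  iter_integral mu D m (fun s => (c * \prod_(u <- s) phi u)%:E) = (c * A ^+ m)%:E.
Proof.
move=> mD mphi phi0 hA; elim: m c => [|m IH] c c0 /=; first by rewrite big_nil.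
have A0 : 0 <= A.
  by rewrite -lee_fin -hA; apply: integral_ge0 => x _; rewrite lee_fin.
under eq_integral => x _.
  have -> : (fun s => (c * \prod_(u <- x :: s) phi u)%:E) =
            (fun s => ((c * phi x) * \prod_(u <- s) phi u)%:E).
    by apply: funext => s /=; rewrite big_cons mulrA.
  rewrite IH ?mulr_ge0 // mulrAC EFinM.
  over.
rewrite /= ge0_integralZl_EFin ?mulr_ge0 ?exprn_ge0 //; last 2 first.
- by move=> x _; rewrite lee_fin.
- exact/measurable_EFinP.
by rewrite hA -EFinM exprSr mulrA.
Qed.

End IteratedIntegral.

Lemma truncated_square_le (R : realType) (p h q : R) (m : nat) (s : seq R) :
  p <= 2 -> 0 <= h -> 0 <= q -> all (fun u => 0 <= u) s ->
  \prod_(u <- s) u <= h * q ^+ m ->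
  \prod_(u <- s) u ^+ 2 <= (h `^ (2 - p) * (q `^ (2 - p)) ^+ m) * \prod_(u <- s) u `^ p.
Proof.
move=> p2 h0 q0 s0 hs.
have prod_ge0 : 0 <= \prod_(u <- s) u.
  by rewrite big_seq prodr_ge0 // => x xs; exact: (allP s0 x xs).
have sq_powR_split u : 0 <= u -> u ^+ 2 = u `^ (2 - p) * u `^ p.
  move=> u0; rewrite -powRD ?subrK; first by rewrite powR_mulrn.
  by rewrite pnatr_eq0.
have prod_sq_split : \prod_(u <- s) u ^+ 2 =
    (\prod_(u <- s) u) `^ (2 - p) * \prod_(u <- s) u `^ p.
  elim: s s0 {hs prod_ge0} => [|u s IH] /=; first by rewrite !big_nil powR1 mulr1.
  move=> /andP[u0 s0]; rewrite !big_cons IH // (sq_powR_split u u0) powRM //.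
    exact: mulrACA.
  by rewrite big_seq prodr_ge0 // => x xs; exact: (allP s0 x xs).
have powp_ge0 : 0 <= \prod_(u <- s) u `^ p.
  by rewrite prodr_ge0 // => x _; exact: powR_ge0.
rewrite prod_sq_split ler_wpM2r //.
have -> : (q `^ (2 - p)) ^+ m = (q ^+ m) `^ (2 - p).
  by rewrite -powR_mulrn ?powR_ge0 // -powRrM mulrC powRrM powR_mulrn.
rewrite -powRM ?exprn_ge0 //; apply: ge0_ler_powR => //; rewrite ?nnegrE //.
- by rewrite subr_ge0.
- by rewrite mulr_ge0 ?exprn_ge0.
Qed.

(* The p-moment of lam over (0,q) is finite: split (0,q) into (0,1), where
   the moment is finite by assumption, and [1,q), where v^p <= q^p and
   lam [1,q) <= lam [1,+oo) < +oo. *)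
Lemma moment_itv_fin (R : realType) (lam : {measure set R -> \bar R}) (p q : R) :
  (forall a : R, 0 < a -> (lam `[a, +oo[%classic < +oo)%E) -> 0 <= p ->
  (\int[lam]_(v in `]0%R, 1%R[) (v `^ p)%:E < +oo)%E -> 1 <= q ->
  (\int[lam]_(v in `]0%R, q[) (v `^ p)%:E < +oo)%E.
Proof.
move=> lam_tail p0 hint q1.
have -> : `]0%R, q[%classic = `]0%R, 1%R[%classic `|` `[1%R, q[%classic :> set R.
  apply/seteqP; split => x /=; rewrite !in_itv /=; last first.
    by move=> [|] /andP[x0 x1]; apply/andP; split; lra.
  by move=> /andP[x0 xq]; have [x1|x1] := ltP x 1; [left|right]; apply/andP; split.
rewrite integral_setU //; last 2 first.
- by apply/measurable_EFinP; apply: measurable_funTS; exact: measurable_powR.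
- by apply/disj_setPS => x [] /=; rewrite !in_itv /= => /andP[_ ?] /andP[? _]; lra.
apply: lte_add_pinfty => //.
apply: (@le_lt_trans _ _ (\int[lam]_(v in `[1%R, q[) (q `^ p)%:E)%E).
  apply: ge0_le_integral_nomeas => x; rewrite /= in_itv /= => /andP[x1 xq].
    by rewrite lee_fin powR_ge0.
  by rewrite lee_fin; apply: ge0_ler_powR; rewrite ?nnegrE; lra.
rewrite integral_cst //; apply: lte_mul_pinfty; rewrite ?lee_fin ?powR_ge0 //.
apply: le_lt_trans (lam_tail 1 ltr01).
by apply: le_measure; rewrite ?inE // => x /=; rewrite !in_itv /= => /andP[->].
Qed.

Lemma truncated_moment_le (R : realType) (lam : {measure set R -> \bar R})
    (p q h A : R) (m : nat) :
  p <= 2 -> 0 <= q -> 0 <= h ->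
  (\int[lam]_(v in `]0%R, q[) (v `^ p)%:E = A%:E)%E ->
  (iter_integral lam `]0%R, q[ m
     (fun s => if (\prod_(u <- s) u <= h * q ^+ m)%R
               then (\prod_(u <- s) u ^+ 2)%:E else 0%E)
   <= (h `^ (2 - p) * (q `^ (2 - p) * A) ^+ m)%:E)%E.
Proof.
move=> p2 q0 h0 hA.
set c := h `^ (2 - p) * (q `^ (2 - p)) ^+ m.
have c0 : 0 <= c by rewrite mulr_ge0 ?exprn_ge0 ?powR_ge0.
apply: (@le_trans _ _ (iter_integral lam `]0%R, q[ m
                         (fun s => (c * \prod_(u <- s) u `^ p)%:E))).
  apply: le_iter_integral => s s_in.
    by case: ifP; rewrite ?lee_fin // big_seq prodr_ge0 // => x _; rewrite sqr_ge0.
  have s0 : all (fun u => 0 <= u) s.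
    apply/allP => x /(allP s_in) /set_mem /=; rewrite in_itv /=.
    by move=> /andP[/ltW].
  case: ifP => hs; rewrite lee_fin; first exact: truncated_square_le.
  by rewrite mulr_ge0 // prodr_ge0 // => x _; rewrite powR_ge0.
have mpow : measurable_fun `]0%R, q[ (fun u : R => u `^ p).
  by apply: measurable_funTS; exact: measurable_powR.
rewrite (@iter_integral_prod _ _ _ _ _ m c (measurable_itv _) mpow _ hA c0); last first.
  by move=> x; rewrite powR_ge0.
by rewrite lee_fin /c exprMn mulrA.
Qed.

(* The logarithmic sum of the first claim is at least 1: its term l = m is
   (2-p)^(-m) >= 1 and all other terms are nonnegative. *)
Lemma log_sum_ge1 (R : realType) (p h : R) (m : nat) :
  1 < p -> p < 2 -> 0 < h < 1 -> (1 <= m)%N ->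
  1 <= \sum_(1 <= l < m.+1)
          ((2 - p) ^- l / ((m - l)`!)%:R * (ln (1 / h)) ^+ (m - l)).
Proof.
move=> p1 p2 /andP[h0 h1] m1.
have r0 : 0 < 2 - p by lra.
have lnh : 0 < ln (1 / h) by apply: ln_gt0; rewrite div1r invf_gt1.
rewrite big_nat_recr //= subnn fact0 expr0 divr1 mulr1.
have top_ge1 : 1 <= (2 - p) ^- m.
  by rewrite invf_ge1 ?exprn_gt0 //; apply: exprn_ile1; lra.
apply: le_trans top_ge1 _; rewrite lerDr.
apply: sumr_ge0 => l _; apply: mulr_ge0; last exact: exprn_ge0 (ltW lnh).
by rewrite divr_ge0 // invr_ge0 exprn_ge0 // ltW.
Qed.

Lemma le_eps_bound (R : realType) (p h B eps : R) (m : nat) :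
  1 < p -> 0 < h < 1 -> 0 <= B -> 0 < eps < 2 - p ->
  h `^ (2 - p) * B ^+ m <= ((B + 1) / eps) ^+ m / (2 - p - eps) * h `^ (2 - p - eps).
Proof.
move=> p1 /andP[h0 h1] B0 /andP[e0 e1].
have B_le : B <= (B + 1) / eps.
  by rewrite ler_pdivlMr // -subr_ge0; nra.
have Bm_le : B ^+ m <= ((B + 1) / eps) ^+ m / (2 - p - eps).
  apply: le_trans (lerXn2r m _ _ B_le) _; rewrite ?nnegrE ?(le_trans B0) //.
  rewrite ler_pdivlMr; last lra.
  by rewrite ler_piMr ?exprn_ge0 ?(le_trans B0 B_le) //; lra.
rewrite mulrC ler_pM ?exprn_ge0 ?powR_ge0 //.
by apply: ger_powR; [rewrite h0 ltW | lra].
Qed.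

Theorem lemma4p8 (R : realType) (lam : {measure set R -> \bar R})
  (lam_pos : lam `]-oo, 0]%classic = 0%E)
  (lam_tail : forall a : R, 0 < a -> (lam `[a, +oo[%classic < +oo)%E)
  (p : R) (p1 : 1 < p) (p2 : p < 2)
  (hint : (\int[lam]_(v in `]0%R, 1%R[) (v `^ p)%:E < +oo)%E) :
  forall q : R, 1 <= q ->
  exists Cq : R, 0 < Cq /\
    forall (m : nat) (h : R), (1 <= m)%N -> 0 < h < 1 ->
      let I := iter_integral lam `]0, q[ m
        (fun s => if \prod_(u <- s) u <= h * q ^+ m
                  then (\prod_(u <- s) u ^+ 2)%:E else 0%E) in
      (I <= (h `^ (2 - p) * Cq ^+ m *
              \sum_(1 <= l < m.+1)
                 ((2 - p) ^- l / ((m - l)`!)%:R * (ln (1 / h)) ^+ (m - l)))%:E)%E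
      /\ (forall eps : R, 0 < eps < 2 - p ->
            (I <= ((Cq / eps) ^+ m / (2 - p - eps) * h `^ (2 - p - eps))%:E)%E).
Proof.
move=> q q1.
have := @moment_itv_fin _ lam p q lam_tail (ltW (lt_trans ltr01 p1)) hint q1.
set J := (\int[lam]_(v in `]0%R, q[) _)%E => J_fin.
have J0 : (0 <= J)%E by apply: integral_ge0 => x _; rewrite lee_fin powR_ge0.
have J_fine : J = (fine J)%:E by rewrite fineK // ge0_fin_numE.
set B := q `^ (2 - p) * fine J.
have B0 : 0 <= B by rewrite mulr_ge0 ?powR_ge0 ?fine_ge0.
exists (B + 1); split; first by rewrite ltr_wpDl.
move=> m h m1 /[dup] h01 /andP[h0 h1] I.
have I_le : (I <= (h `^ (2 - p) * B ^+ m)%:E)%E.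
  by apply: truncated_moment_le; rewrite ?ltW //; lra.
split; last by move=> eps he; apply: le_trans I_le _; rewrite lee_fin le_eps_bound.
apply: le_trans I_le _; rewrite lee_fin -mulrA ler_wpM2l ?powR_ge0 //.
rewrite -[X in X <= _]mulr1 ler_pM ?exprn_ge0 ?log_sum_ge1 //.
by apply: lerXn2r; rewrite ?nnegrE ?addr_ge0 // lerDl.
Qed.
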